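(* Let $d$ be even, let $n>2d$ be prime, let $\omega=e^{2\pi i/n}$, let $T$ be a $d\times d$ Cauchy matrix over $\mathbb{F}_n$, and let $(W_T)_{(i_1,\dots,i_d),(j_1,\dots,j_d)}=\omega^{(i_1,\dots,i_d)\,T\,(j_1,\dots,j_d)^\top}$. For every $\lambda\subseteq[d]$, the $n^{2|\lambda|}\times n^{2(d-|\lambda|)}$ matrix $W_T^{[\lambda]}$ defined by $(W_T^{[\lambda]})_{(i_\lambda,j_\lambda),(i_{\lambda^c},j_{\lambda^c})}=(W_T)_{(i_1,\dots,i_d),(j_1,\dots,j_d)}$ (where $\lambda^c=[d]\setminus\lambda$ and $i_\lambda$ denotes the subtuple of coordinates in $\lambda$) satisfies $\mathrm{rank}(W_T^{[\lambda]})=n^{2\min\{|\lambda|,\,d-|\lambda|\}}$.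
   Context: A Cauchy matrix over $\mathbb{F}_n$ is $T_{ab}=1/(x_a-y_b)$ for pairwise distinct $x_1,\dots,x_d,y_1,\dots,y_d\in\mathbb{F}_n$; every square submatrix of it is nonsingular. Indices in $[n]$ are regarded as elements of $\mathbb{F}_n$ and the exponent is computed in $\mathbb{F}_n$. *)

From HB Require Import structures.
From mathcomp Require Import all_boot all_order all_algebra all_field.
Set Implicit Arguments. Unset Strict Implicit. Unset Printing Implicit Defensive.
Import Order.TTheory GRing.Theory Num.Theory.
Local Open Scope ring_scope.

(* omega = e^{2 pi i / n} in algC: n.-root (-1) is the n-th root of -1 with
   minimal nonnegative argument, i.e. e^{i pi / n}; its square is e^{2 pi i/n}. *)
Definition omega (n : nat) : algC := (n.-root (-1)) ^+ 2.

Definition is_cauchy (F : fieldType) (d : nat) (T : 'M[F]_d) : Prop :=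
  exists (x y : 'I_d -> F),
    [/\ injective x, injective y, (forall a b, x a != y b)
      & forall a b, T a b = (x a - y b)^-1].

Definition bform (F : fieldType) (d : nat) (T : 'M[F]_d) (i j : 'I_d -> F) : F :=
  \sum_(a < d) \sum_(b < d) i a * T a b * j b.

Definition W_entry (n d : nat) (T : 'M['F_n]_d) (i j : 'I_d -> 'F_n) : algC :=
  omega n ^+ (nat_of_ord (bform T i j)).

Notation sub_lam lam := {k : _ | k \in lam}.
Notation sub_lamc lam := {k : _ | k \in ~: lam}.

Definition glue (F : Type) (d : nat) (lam : {set 'I_d})
    (a : {ffun sub_lam lam -> F}) (b : {ffun sub_lamc lam -> F}) (k : 'I_d) : F :=
  match @idP (k \in lam) with
  | ReflectT h => a (exist _ k h)
  | ReflectF h => b (exist _ k (introT setCP h))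
  end.

Definition frank (R : fieldType) (I J : finType) (M : I -> J -> R) : nat :=
  \rank (\matrix_(r < #|I|, c < #|J|) M (enum_val r) (enum_val c)).

Definition W_flat (n d : nat) (T : 'M['F_n]_d) (lam : {set 'I_d})
    (r : {ffun sub_lam lam -> 'F_n} * {ffun sub_lam lam -> 'F_n})
    (c : {ffun sub_lamc lam -> 'F_n} * {ffun sub_lamc lam -> 'F_n}) : algC :=
  W_entry T (glue r.1 c.1) (glue r.2 c.2).

From HB Require Import structures.
From mathcomp Require Import all_boot all_order all_algebra all_field ring.
Set Implicit Arguments. Unset Strict Implicit. Unset Printing Implicit Defensive.
Import Order.TTheory GRing.Theory Num.Theory.
Local Open Scope ring_scope.

(* Put [chi z = omega ^ z], an additive character of F_n with [chi e != 1]
   for [e != 0] since n is prime.  The flattening has entries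
   [chi (B (glue u x, glue v y))], where [B] is the bilinear form of T, rows
   are [(u, v)] and columns [(x, y)].  When |lam| <= d - |lam| the rows are
   pairwise orthogonal: for two distinct rows, translating the columns by a
   suitable [(dx, dy)] multiplies [\sum_c chi (row c - row' c)] by some
   [chi e != 1].  Such a translation exists because a nonzero vector
   supported on lam has a nonzero image under the block of T with rows in lam
   and columns outside it; for a Cauchy matrix this follows by counting the
   roots of the numerator of [\sum_a w_a / (X - x_a)].  Hence the rank is the
   number n^(2|lam|) of rows.  The other case is the same argument applied to
   the transpose, with lam and its complement exchanged. *)

Section TabulatedRank.
Variables (R : fieldType) (I J : finType).

Lemma frank_tr (M : I -> J -> R) : frank (fun j i => M i j) = frank M.
Proof.
by rewrite /frank -mxrank_tr; congr (\rank _); apply/matrixP => r c; rewrite !mxE.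
Qed.

Lemma frank_rinv (M : I -> J -> R) (N : J -> I -> R) :
  (forall i i', \sum_j M i j * N j i' = (i == i')%:R) -> frank M = #|I|.
Proof.
move=> MN; apply/eqP/row_freeP.
exists (\matrix_(c < #|J|, r < #|I|) N (enum_val c) (enum_val r)).
apply/matrixP => r r'; rewrite !mxE -(inj_eq enum_val_inj) -MN.
rewrite [RHS](reindex (@enum_val J predT)) /=; last exact/onW_bij/enum_val_bij.
by apply: eq_bigr => c _; rewrite !mxE.
Qed.

End TabulatedRank.

Section AdditiveCharacter.
Variable n : nat.
Hypothesis n_prime : prime n.

Lemma omega_neq1 : omega n != 1.
Proof.
have n_gt1 := prime_gt1 n_prime; have n_gt0 := ltnW n_gt1.
rewrite /omega sqrf_eq1 negb_or; apply/andP; split.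
  apply: contra_neq (@oner_neq0 algC) => r1.
  have := @rootCK algC n n_gt0 (-1); rewrite r1 expr1n => /eqP.
  by rewrite -addr_eq0 -mulr2n pnatr_eq0.
by apply: contraFneq _ (@rootC_lt0 algC n (-1) n_gt1) => ->; rewrite ltrN10.
Qed.

Lemma omega_prim : n.-primitive_root (omega n).
Proof.
have n_gt0 := prime_gt0 n_prime.
have omega_n : omega n ^+ n = 1.
  by rewrite /omega -exprM mulnC exprM rootCK // sqrrN expr1n.
have [m omega_m m_dvd_n] := prim_order_exists n_gt0 omega_n.
have [m1 | m_neq1] := eqVneq m 1%N.
  by move: omega_neq1; rewrite -(prim_expr_order omega_m) m1 expr1 eqxx.
by move: omega_m; rewrite (elimT (prime_nt_dvdP n_prime m_neq1) m_dvd_n).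
Qed.

Definition chi (z : 'F_n) : algC := omega n ^+ z.

Lemma chi0 : chi 0 = 1.
Proof. exact: expr0. Qed.

Lemma chiD a b : chi (a + b) = chi a * chi b.
Proof.
have omega_card : omega n ^+ (Zp_trunc (pdiv n)).+2 = 1.
  by rewrite Fp_cast // prim_expr_order // omega_prim.
by rewrite /chi -exprD -[RHS](expr_mod _ omega_card).
Qed.

Lemma chi_eq1 e : (chi e == 1) = (e == 0).
Proof.
have e_lt_n : (e < n)%N by rewrite -[n in (_ < n)%N](Fp_cast n_prime) ltn_ord.
by rewrite /chi -(prim_order_dvd omega_prim) /dvdn modn_small.
Qed.

Lemma sum_chi_shift_eq0 (C : finType) (g : C -> 'F_n) (s : C -> C) e :
  injective s -> e != 0 -> (forall c, g (s c) = g c + e) -> \sum_c chi (g c) = 0.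
Proof.
move=> s_inj e_neq0 g_shift; set S := \sum_c _.
have S_chi_e : S = chi e * S.
  rewrite {1}/S (reindex_inj s_inj) mulr_sumr; apply: eq_bigr => c _.
  by rewrite g_shift chiD mulrC.
apply/eqP; move/eqP: S_chi_e; rewrite -subr_eq0 -{1}[S]mul1r -mulrBl mulf_eq0.
by rewrite subr_eq0 eq_sym chi_eq1 (negbTE e_neq0).
Qed.

Lemma frank_chi (R C : finType) (f : R -> C -> 'F_n) (c0 : C) :
  (forall r r0, r != r0 -> \sum_c chi (f r c - f r0 c) = 0) ->
  frank (fun r c => chi (f r c)) = #|R|.
Proof.
move=> orth; have card_C : #|C|%:R != 0 :> algC.
  by rewrite pnatr_eq0 -lt0n; apply/card_gt0P; exists c0.
apply: (frank_rinv (N := fun c r0 => chi (- f r0 c) / #|C|%:R)) => r r0.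
under eq_bigr do rewrite mulrA -chiD; rewrite -mulr_suml.
have [<- | r_neq_r0] := eqVneq r r0; last by rewrite orth ?mul0r.
by under eq_bigr do rewrite subrr chi0; rewrite sumr_const divff.
Qed.

End AdditiveCharacter.

Section CauchyMatrix.
Variables (F : fieldType) (d : nat).

Lemma cauchy_comb_eq0 (x y : 'I_d -> F) (P Q : {set 'I_d}) (w : 'I_d -> F) :
    injective x -> injective y -> (forall a b, x a != y b) -> (#|P| <= #|Q|)%N ->
    (forall b, b \in Q -> \sum_(a in P) w a / (x a - y b) = 0) ->
  forall a, a \in P -> w a = 0.
Proof.
move=> x_inj y_inj x_neq_y le_PQ comb_eq0 a0 a0P.
(* [p] is the numerator of [\sum_(a in P) w a / ('X - x a)]: it has size at
   most |P| but vanishes at the |Q| >= |P| distinct points [y b]. *)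
pose l a := \prod_(a' in P :\ a) ('X - (x a')%:P).
pose p := \sum_(a in P) w a *: l a.
have size_p : (size p <= #|P|)%N.
  apply: leq_trans (size_sum _ _ _) _; apply/bigmax_leqP => a aP.
  apply: leq_trans (size_scale_leq _ _) _.
  by rewrite /l -big_enum size_prod_XsubC -cardE (cardsD1 a P) aP.
have root_p b : b \in Q -> root p (y b).
  move=> bQ; apply/eqP.
  rewrite -[0](mulr0 (- \prod_(a in P) (y b - x a))) -(comb_eq0 b bQ).
  rewrite horner_sum mulr_sumr; apply: eq_bigr => a aP.
  rewrite hornerZ horner_prod (big_setD1 a aP) /=.
  under eq_bigr do rewrite hornerXsubC.
  by field; rewrite subr_eq0.
have p_eq0 : p = 0.
  apply: contraTeq le_PQ => p_neq0; rewrite -ltnNge.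
  have := max_poly_roots p_neq0 (rs := [seq y b | b <- enum Q]).
  rewrite map_inj_uniq // enum_uniq size_map -cardE => /(_ _ isT).
  have -> : all (root p) [seq y b | b <- enum Q].
    by apply/allP => _ /mapP [b bQ ->]; apply: root_p; rewrite -mem_enum.
  by move=> /(_ isT) /leq_trans; apply.
have /eqP := congr1 (horner^~ (x a0)) p_eq0.
rewrite horner0 horner_sum (bigD1 a0) //= big1 ?addr0 => [|a /andP [aP a_neq_a0]].
  rewrite hornerZ mulf_eq0 => /orP [/eqP //|]; rewrite horner_prod.
  move=> /prodf_eq0 [a /setD1P [a_neq_a0 _]].
  rewrite hornerXsubC subr_eq0 => /eqP /x_inj a0_eq_a.
  by rewrite a0_eq_a eqxx in a_neq_a0.
rewrite hornerZ horner_prod (big_setD1 a0) /=; last first.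
  by rewrite !inE eq_sym a_neq_a0.
by rewrite hornerXsubC subrr mul0r mulr0.
Qed.

Lemma is_cauchy_tr (T : 'M[F]_d) : is_cauchy T -> is_cauchy T^T.
Proof.
case=> x [y [x_inj y_inj x_neq_y T_xy]].
exists (fun a => - y a), (fun b => - x b); split.
- by move=> a a' /oppr_inj /y_inj.
- by move=> b b' /oppr_inj /x_inj.
- by move=> a b; rewrite eqr_opp eq_sym.
- by move=> a b; rewrite mxE T_xy opprK addrC.
Qed.

Lemma cauchy_comb_neq0 (T : 'M[F]_d) (P : {set 'I_d}) (w : 'I_d -> F) a0 :
    is_cauchy T -> (#|P| <= #|~: P|)%N -> (forall a, a \notin P -> w a = 0) ->
    w a0 != 0 ->
  exists2 b, b \notin P & \sum_a w a * T a b != 0.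
Proof.
case=> x [y [x_inj y_inj x_neq_y T_xy]] le_P w_supp w_a0.
have /existsP [b /andP [bP comb_b]] :
    [exists b, (b \notin P) && (\sum_a w a * T a b != 0)]; last by exists b.
have a0P : a0 \in P by apply: contraTT w_a0 => /w_supp ->; rewrite eqxx.
apply: contraTT w_a0 => /existsPn comb_eq0; apply/negPn/eqP.
apply: (cauchy_comb_eq0 x_inj y_inj x_neq_y le_P) => // b.
rewrite inE => bP; transitivity (\sum_a w a * T a b).
  rewrite [RHS](bigID (mem P)) /= [X in _ + X]big1 => [|a /w_supp ->]; last first.
    by rewrite mul0r.
  by rewrite addr0; apply: eq_bigr => a _; rewrite T_xy.
by apply/eqP; move: (comb_eq0 b); rewrite bP negbK.
Qed.

End CauchyMatrix.

Section BilinearForm.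
Variables (F : fieldType) (d : nat) (T : 'M[F]_d).

Lemma eq_bform p p' q q' : p =1 p' -> q =1 q' -> bform T p q = bform T p' q'.
Proof.
by move=> pp' qq'; apply: eq_bigr => a _; apply: eq_bigr => b _; rewrite pp' qq'.
Qed.

Lemma bform0l q : bform T (fun=> 0) q = 0.
Proof. by apply: big1 => a _; apply: big1 => b _; rewrite !mul0r. Qed.

Lemma bform_tr p q : bform T p q = bform T^T q p.
Proof.
rewrite /bform exchange_big; apply: eq_bigr => b _; apply: eq_bigr => a _.
by rewrite mxE; ring.
Qed.

Lemma bform_deltar p b : bform T p (fun k => (k == b)%:R) = \sum_a p a * T a b.
Proof.
apply: eq_bigr => a _; rewrite (bigD1 b) //= eqxx mulr1 big1 ?addr0 //.
move=> b' b'_neq_b.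
by rewrite (negbTE b'_neq_b) mulr0.
Qed.

Lemma bform_shift p p0 s q q0 t :
  bform T (p \+ s) (q \+ t) - bform T (p0 \+ s) (q0 \+ t) =
  bform T p q - bform T p0 q0 + (bform T (p \- p0) t + bform T s (q \- q0)).
Proof.
rewrite /bform -!sumrB -!big_split /=; apply: eq_bigr => a _.
by rewrite -!sumrB -!big_split /=; apply: eq_bigr => b _; ring.
Qed.

End BilinearForm.

Section Glue.
Variables (d : nat) (lam : {set 'I_d}).

Lemma glue_in (F : Type) u x k (k_lam : k \in lam) :
  @glue F d lam u x k = u (exist _ k k_lam).
Proof.
rewrite /glue; case: {-}_ / idP => [k_lam' | /(_ k_lam) //].
by rewrite (bool_irrelevance k_lam' k_lam).
Qed.

Lemma glue_out (F : Type) u x k (k_lamc : k \in ~: lam) :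
  @glue F d lam u x k = x (exist _ k k_lamc).
Proof.
rewrite /glue; case: {-}_ / idP => [k_lam | k_lam'].
  by have := k_lamc; rewrite inE k_lam.
by rewrite (bool_irrelevance (introT setCP k_lam') k_lamc).
Qed.

Variable F : pzRingType.
Implicit Types (u : {ffun sub_lam lam -> F}) (x : {ffun sub_lamc lam -> F}).

Lemma glueD u u' x x' k : glue (u + u') (x + x') k = glue u x k + glue u' x' k.
Proof. by rewrite /glue; case: {-}_ / idP => ?; rewrite ffunE. Qed.

Lemma glue_u0 u k : k \notin lam -> glue u 0 k = 0.
Proof. by rewrite -in_setC => k_lamc; rewrite (glue_out _ _ k_lamc) ffunE. Qed.

Lemma glue_0x x k : k \notin ~: lam -> glue 0 x k = 0.
Proof. by rewrite inE negbK => k_lam; rewrite (glue_in _ _ k_lam) ffunE. Qed.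

Lemma glue_u0_neq0 u : u != 0 -> exists k, glue u 0 k != 0.
Proof.
move=> u_neq0; have /existsP [[k k_lam] u_k] : [exists k, u k != 0].
  apply: contraNT u_neq0 => /existsPn u_eq0.
  by apply/eqP/ffunP => k; rewrite ffunE; apply/eqP/negbNE/u_eq0.
by exists k; rewrite (glue_in _ _ k_lam).
Qed.

Lemma glue_0x_neq0 x : x != 0 -> exists k, glue 0 x k != 0.
Proof.
move=> x_neq0; have /existsP [[k k_lamc] x_k] : [exists k, x k != 0].
  apply: contraNT x_neq0 => /existsPn x_eq0.
  by apply/eqP/ffunP => k; rewrite ffunE; apply/eqP/negbNE/x_eq0.
by exists k; rewrite (glue_out _ _ k_lamc).
Qed.

Lemma glue_0x_delta b : b \notin lam ->
  exists x, forall k, glue 0 x k = (k == b)%:R.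
Proof.
move=> b_lamc; exists [ffun k => (val k == b)%:R] => k.
have [k_lam | ] := boolP (k \in lam); last first.
  by rewrite -in_setC => k_lamc; rewrite (glue_out _ _ k_lamc) ffunE.
have k_neq_b : k != b by apply: contraTneq k_lam => ->.
by rewrite (glue_in _ _ k_lam) ffunE (negbTE k_neq_b).
Qed.

Lemma glue_u0_delta b : b \notin ~: lam ->
  exists u, forall k, glue u 0 k = (k == b)%:R.
Proof.
rewrite inE negbK => b_lam; exists [ffun k => (val k == b)%:R] => k.
have [k_lam | k_lamc] := boolP (k \in lam).
  by rewrite (glue_in _ _ k_lam) ffunE.
have k_neq_b : k != b by apply: contraNneq k_lamc => ->.
rewrite -in_setC in k_lamc.
by rewrite (glue_out _ _ k_lamc) ffunE (negbTE k_neq_b).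
Qed.

End Glue.

(* [g] abstracts [glue], so that the argument applies both to [glue] with
   [P = lam] and, after transposition, to [fun x u => glue u x] with
   [P = ~: lam]. *)
Section Flattening.
Variables (n d : nat) (T : 'M['F_n]_d).
Hypotheses (n_prime : prime n) (T_cauchy : is_cauchy T).
Variables (A B : finType) (P : {set 'I_d}).
Variable g : {ffun A -> 'F_n} -> {ffun B -> 'F_n} -> 'I_d -> 'F_n.
Hypothesis gD : forall u u' x x' k, g (u + u') (x + x') k = g u x k + g u' x' k.
Hypothesis g_supp : forall u k, k \notin P -> g u 0 k = 0.
Hypothesis g_nondeg : forall u, u != 0 -> exists k, g u 0 k != 0.
Hypothesis g_delta :
  forall b, b \notin P -> exists x, forall k, g 0 x k = (k == b)%:R.
Hypothesis le_P : (#|P| <= #|~: P|)%N.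

Local Notation rowT := ({ffun A -> 'F_n} * {ffun A -> 'F_n})%type.
Local Notation colT := ({ffun B -> 'F_n} * {ffun B -> 'F_n})%type.

Let flat (r : rowT) (c : colT) := bform T (g r.1 c.1) (g r.2 c.2).

Let flat_incr (r r0 : rowT) dx dy :=
  bform T (g (r.1 - r0.1) 0) (g 0 dy) + bform T (g 0 dx) (g (r.2 - r0.2) 0).

Let g00 k : g 0 0 k = 0.
Proof. by apply: (@addrI _ (g 0 0 k)); rewrite addr0 -gD !addr0. Qed.

Let g_shift u x x' k : g u (x + x') k = g u x k + g 0 x' k.
Proof. by rewrite -gD addr0. Qed.

Let g_sub u u' x k : g u x k - g u' x k = g (u - u') 0 k.
Proof. by apply/eqP; rewrite subr_eq -gD subrK add0r. Qed.

Lemma flat_shift r r0 dx dy c :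
  flat r (c.1 + dx, c.2 + dy) - flat r0 (c.1 + dx, c.2 + dy) =
  flat r c - flat r0 c + flat_incr r r0 dx dy.
Proof.
case: r r0 c => [u v] [u0 v0] [x y]; rewrite /flat /flat_incr /=.
rewrite !(eq_bform T (g_shift _ x dx) (g_shift _ y dy)) bform_shift.
by congr (_ + (_ + _)); apply: eq_bform => k //=; exact: g_sub.
Qed.

Lemma flat_incr_neq0 r r0 : r != r0 -> exists dx dy, flat_incr r r0 dx dy != 0.
Proof.
case: r r0 => [u v] [u0 v0] r_neq_r0; rewrite /flat_incr /=.
have [u_eq_u0 | u_neq_u0] := eqVneq u u0.
  have v_neq_v0 : v != v0 by apply: contraNneq r_neq_r0 => ->; rewrite u_eq_u0.
  have [k w_k] : exists k, g (v - v0) 0 k != 0.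
    by apply: g_nondeg; rewrite subr_eq0.
  have [b bP comb_b] :=
    cauchy_comb_neq0 (is_cauchy_tr T_cauchy) le_P (g_supp _) w_k.
  have [x x_delta] := g_delta bP.
  exists x, 0; rewrite u_eq_u0 subrr (eq_bform T g00 g00) bform0l add0r.
  by rewrite (eq_bform T x_delta (frefl _)) bform_tr bform_deltar.
have [k w_k] : exists k, g (u - u0) 0 k != 0.
  by apply: g_nondeg; rewrite subr_eq0.
have [b bP comb_b] := cauchy_comb_neq0 T_cauchy le_P (g_supp _) w_k.
have [y y_delta] := g_delta bP.
exists 0, y; rewrite (eq_bform T (frefl _) y_delta) bform_deltar.
by rewrite (eq_bform T g00 (frefl _)) bform0l addr0.
Qed.

Lemma frank_flat : frank (fun r c => chi (flat r c)) = #|{: rowT}|.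
Proof.
apply: (frank_chi n_prime ((0, 0) : colT)) => r r0.
move=> /flat_incr_neq0 [dx [dy incr_neq0]].
apply: (sum_chi_shift_eq0 n_prime (s := fun c : colT => (c.1 + dx, c.2 + dy)))
  incr_neq0 _; last exact: flat_shift.
by move=> [x y] [x' y'] [/addIr -> /addIr ->].
Qed.

End Flattening.

Lemma card_Fp_ffun_pair n (I : finType) : prime n ->
  #|{: {ffun I -> 'F_n} * {ffun I -> 'F_n}}| = (n ^ (2 * #|I|))%N.
Proof.
by move=> n_prime; rewrite card_prod card_ffun card_Fp // -expnD addnn -mul2n.
Qed.

Theorem proposition6p10 (d n : nat) (T : 'M['F_n]_d) (lam : {set 'I_d}) :
  ~~ odd d -> prime n -> (2 * d < n)%N -> is_cauchy T ->
  frank (@W_flat n d T lam) = (n ^ (2 * minn #|lam| (d - #|lam|)))%N.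
Proof.
move=> _ n_prime _ T_cauchy.
have card_lamc : #|~: lam| = (d - #|lam|)%N by rewrite cardsCs setCK card_ord.
have [le_lam | lt_lamc] := leqP #|lam| (d - #|lam|).
  rewrite -card_sig -card_Fp_ffun_pair //.
  apply: (frank_flat n_prime T_cauchy (@glueD d lam _) (@glue_u0 d lam _)
           (@glue_u0_neq0 d lam _) (@glue_0x_delta d lam _)).
  by rewrite card_lamc.
rewrite -card_lamc -card_sig -card_Fp_ffun_pair // -frank_tr.
apply: (frank_flat n_prime T_cauchy (g := fun x u => glue u x) (P := ~: lam)).
- by move=> x x' u u' k; apply: glueD.
- exact: glue_0x.
- exact: glue_0x_neq0.
- exact: glue_u0_delta.
- by rewrite setCK card_lamc ltnW.
Qed.
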